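(* Let $\alpha\in[0,1]$ and let $f$ satisfy assumption A.$\alpha$. Consider iterates $x_{k+1}=x_k+s_k$, $k\ge0$, where $(H_k+M_k)s_k=-g_k+r_k$ with $\|r_k\|\le\min[\kappa_{rg}\|g_k\|,\kappa_{rs}\|M_ks_k\|]$ ($\kappa_{rg}\in[0,1)$, $\kappa_{rs}>0$), $M_k$ symmetric positive semidefinite, $\lambda_{\min}(M_k)\le\bar\kappa_\lambda\|s_k\|^\alpha$ for some $\bar\kappa_\lambda>1$ independent of $k$, and $\kappa(M_k)\le\kappa_\kappa$ for some $\kappa_\kappa\ge1$ independent of $k$. Then there exists $\bar\kappa_{s,\alpha}>0$ independent of $k$ such that for all $k\ge0$ $$\|s_k\|\ge\bar\kappa_{s,\alpha}\|g_{k+1}\|^{1/(1+\alpha)};$$ one can take $\bar\kappa_{s,\alpha}=\big[L_{H,\alpha}(1+\alpha)^{-1}+\kappa_\kappa(1+\kappa_{rs})\bar\kappa_\lambda\big]^{-1/(1+\alpha)}$.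
   Context: Assumption A.$\alpha$: $f:\mathbb{R}^n\to\mathbb{R}$ is twice continuously differentiable and bounded below, $\|\nabla f(x)-\nabla f(y)\|\le L_g\|x-y\|$ and $\|\nabla^2f(x)-\nabla^2f(y)\|\le L_{H,\alpha}\|x-y\|^\alpha$ for all $x,y\in\mathbb{R}^n$. $g_k=\nabla f(x_k)$, $H_k=\nabla^2f(x_k)$. For a symmetric positive semidefinite matrix $M$, the condition number is $\kappa(M)=\lambda_{\max}(M)/\lambda_{\min}(M)$ if $M\succ0$, $\kappa(M)=+\infty$ if $\lambda_{\min}(M)=0$ and $M\ne0$, and $\kappa(0)=1$. *)

From Stdlib Require Import Reals.
From mathcomp Require Import ssreflect ssrfun ssrbool eqtype ssrnat seq fintype bigop.
Set Implicit Arguments. Unset Strict Implicit. Unset Printing Implicit Defensive.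
Local Open Scope R_scope.

Definition vec (n : nat) := 'I_n -> R.
Definition mat (n : nat) := 'I_n -> 'I_n -> R.

Definition vadd n (u v : vec n) : vec n := fun i => u i + v i.
Definition vsub n (u v : vec n) : vec n := fun i => u i - v i.
Definition vopp n (u : vec n) : vec n := fun i => - u i.
Definition dot n (u v : vec n) : R := \big[Rplus/0]_(i < n) (u i * v i).
Definition vnorm n (u : vec n) : R := sqrt (dot u u).
Definition mv n (A : mat n) (v : vec n) : vec n :=
  fun i => \big[Rplus/0]_(j < n) (A i j * v j).
Definition madd n (A B : mat n) : mat n := fun i j => A i j + B i j.
Definition msub n (A B : mat n) : mat n := fun i j => A i j - B i j.

Definition rpow (x a : R) : R :=
  if Req_EM_T x 0 then (if Req_EM_T a 0 then 1 else 0) else Rpower x a.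

Definition is_gradient n (f : vec n -> R) (g : vec n -> vec n) : Prop :=
  forall x eps, 0 < eps -> exists delta, 0 < delta /\
    forall h : vec n, vnorm h < delta ->
      Rabs (f (vadd x h) - f x - dot (g x) h) <= eps * vnorm h.

Definition is_derivative_map n (g : vec n -> vec n) (H : vec n -> mat n) : Prop :=
  forall x eps, 0 < eps -> exists delta, 0 < delta /\
    forall h : vec n, vnorm h < delta ->
      vnorm (vsub (vsub (g (vadd x h)) (g x)) (mv (H x) h)) <= eps * vnorm h.

Definition mat_continuous n (H : vec n -> mat n) : Prop :=
  forall x eps, 0 < eps -> exists delta, 0 < delta /\
    forall y : vec n, vnorm (vsub y x) < delta ->
      forall v : vec n, vnorm (mv (msub (H y) (H x)) v) <= eps * vnorm v.

Definition mat_symmetric n (A : mat n) : Prop := forall i j, A i j = A j i.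
Definition psd n (A : mat n) : Prop := forall v : vec n, 0 <= dot v (mv A v).
Definition is_zero_mat n (A : mat n) : Prop := forall i j, A i j = 0.

Definition is_eigenvalue n (A : mat n) (l : R) : Prop :=
  exists v : vec n, (exists i, v i <> 0) /\ forall i, mv A v i = l * v i.
Definition is_lambda_min n (A : mat n) (l : R) : Prop :=
  is_eigenvalue A l /\ forall m, is_eigenvalue A m -> l <= m.
Definition is_lambda_max n (A : mat n) (l : R) : Prop :=
  is_eigenvalue A l /\ forall m, is_eigenvalue A m -> m <= l.

(* condition number of a symmetric PSD matrix, value in R ∪ {+oo}
   (None = +oo): kappa(0) = 1, +oo if lambda_min = 0 and A <> 0,
   lambda_max/lambda_min if A is positive definite. *)
Definition is_cond_number n (A : mat n) (k : option R) : Prop :=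
  (is_zero_mat A /\ k = Some 1) \/
  (~ is_zero_mat A /\ exists lmin lmax, is_lambda_min A lmin /\ is_lambda_max A lmax /\
     ((lmin = 0 /\ k = None) \/ (0 < lmin /\ k = Some (lmax / lmin)))).

Definition ole (k : option R) (c : R) : Prop :=
  match k with Some v => v <= c | None => False end.

(* Put u := g(x_{k+1}).  The step equation gives g(x_k) + H_k s_k = r_k - M_k s_k, so
   |u|^2 = u'(g(x_k + s_k) - g(x_k) - H_k s_k) + u'r_k - u'M_k s_k.
   Integrating the Hölder bound on the Hessian along the segment bounds the first
   term by |u| L_H |s_k|^(1+alpha) / (1+alpha), and
   |r_k| + |M_k s_k| <= (1 + kappa_rs) |M_k s_k|
                     <= (1 + kappa_rs) lambda_max(M_k) |s_k|
                     <= (1 + kappa_rs) kappa_kap kappa_lam |s_k|^(1+alpha).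
   Dividing by |u| and taking the (1+alpha)-th root gives the claim.  The bound
   |A w| <= lambda_max(A) |w| for symmetric positive semidefinite A comes from a
   maximiser of the Rayleigh quotient on the (compact) unit sphere, which is an
   eigenvector. *)

From Stdlib Require Import Reals Lra.
From mathcomp Require Import all_boot all_algebra.
From mathcomp Require Import boolp classical_sets topology normedtype derive.
From mathcomp Require Import Rstruct Rstruct_topology.
Set Implicit Arguments.
Unset Strict Implicit.
Import GRing.Theory Num.Theory.
Local Open Scope R_scope.

Lemma quadratic_ge0_discr a b c :
  (forall t, 0 <= a + 2 * b * t + c * t * t) -> b * b <= a * c.
Proof.
move=> Hq; have Ha := Hq 0.
case: (Rtotal_order c 0) => [Hc | [Hc | Hc]].
- exfalso; set T := 1 + (a + 2 * Rabs b) / - c.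
  have HT : T * - c = - c + a + 2 * Rabs b by rewrite /T; field; lra.
  have HT1 : 1 <= T.
    have : 0 <= (a + 2 * Rabs b) * / - c; last by rewrite /T /Rdiv; lra.
    by apply: Rmult_le_pos; [have := Rabs_pos b; lra | left; apply: Rinv_0_lt_compat; lra].
  have Hb : b * T <= Rabs b * T by apply: Rmult_le_compat_r; [lra | apply: Rle_abs].
  have := Hq T; nra.
- subst c; case: (Req_dec b 0) => [-> | Hb]; first lra.
  have := Hq (- (a + 1) / (2 * b)).
  have -> : a + 2 * b * (- (a + 1) / (2 * b)) + 0 * (- (a + 1) / (2 * b)) * (- (a + 1) / (2 * b))
          = -1 by field.
  lra.
- have := Hq (- b / c).
  have -> : a + 2 * b * (- b / c) + c * (- b / c) * (- b / c) = (a * c - b * b) / c by field; lra.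
  move=> H; have := Rmult_le_compat_r c _ _ (Rlt_le _ _ Hc) H.
  have -> : (a * c - b * b) / c * c = a * c - b * b by field; lra.
  lra.
Qed.

Section Vectors.
Variable n : nat.
Implicit Types (u v w : vec n).

Lemma dotE u v : dot u v = (\sum_(i < n) u i * v i)%R.
Proof. by []. Qed.

Lemma eq_dot u v u' v' : u =1 u' -> v =1 v' -> dot u v = dot u' v'.
Proof. by move=> Eu Ev; apply: eq_bigr => i _; rewrite Eu Ev. Qed.

Lemma dotC u v : dot u v = dot v u.
Proof. by apply: eq_bigr => i _; apply: mulrC. Qed.

Lemma dotDr u v w : dot u (fun i => v i + w i) = dot u v + dot u w.
Proof. by rewrite !dotE -big_split; apply: eq_bigr => i _; apply: mulrDr. Qed.

Lemma dotZr a u v : dot u (fun i => a * v i) = a * dot u v.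
Proof.
rewrite !dotE; change (a * ?x) with (a * x)%R; rewrite mulr_sumr.
by apply: eq_bigr => i _; apply: mulrCA.
Qed.

Lemma dotBr u v w : dot u (fun i => v i - w i) = dot u v - dot u w.
Proof.
rewrite (@eq_dot _ _ u (fun i => v i + -1 * w i)) // ?dotDr ?dotZr; first lra.
by move=> i; ring.
Qed.

Lemma dotDl u v w : dot (fun i => u i + v i) w = dot u w + dot v w.
Proof. by rewrite dotC dotDr !(dotC w). Qed.

Lemma dotZl a u v : dot (fun i => a * u i) v = a * dot u v.
Proof. by rewrite dotC dotZr dotC. Qed.

Lemma dot0l u v : u =1 (fun=> 0) -> dot u v = 0.
Proof.
move=> Hu; rewrite (@eq_dot _ _ (fun i => 0 * u i) v) // ?dotZl; first lra.
by move=> i; rewrite Hu; ring.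
Qed.

Lemma dot_ge0 u : 0 <= dot u u.
Proof. by apply/RleP; apply: sumr_ge0 => i _; apply: sqr_ge0. Qed.

Lemma dot_eq0 u : dot u u = 0 -> u =1 (fun=> 0).
Proof.
move=> Hu i; have := @psumr_eq0P _ _ _ _ (fun i _ => sqr_ge0 (u i)) Hu i isT.
by move/eqP; rewrite mulf_eq0 orbb => /eqP.
Qed.

Lemma sqr_le_dot u i : u i * u i <= dot u u.
Proof.
by apply/RleP; rewrite dotE (bigD1 i) //= lerDl; apply: sumr_ge0 => j _; apply: sqr_ge0.
Qed.

Lemma vnorm_ge0 u : 0 <= vnorm u.
Proof. exact: sqrt_pos. Qed.

Lemma vnorm_sqr u : vnorm u * vnorm u = dot u u.
Proof. exact/sqrt_sqrt/dot_ge0. Qed.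

Lemma eq_vnorm u v : u =1 v -> vnorm u = vnorm v.
Proof. by move=> E; rewrite /vnorm (eq_dot E E). Qed.

Lemma vnormZ a u : vnorm (fun i => a * u i) = Rabs a * vnorm u.
Proof.
rewrite /vnorm dotZl dotZr -Rmult_assoc sqrt_mult; [|nra|exact: dot_ge0].
by rewrite -sqrt_Rsqr_abs.
Qed.

Lemma cauchy_schwarz u v : Rabs (dot u v) <= vnorm u * vnorm v.
Proof.
have : dot u v * dot u v <= dot u u * dot v v.
  apply: quadratic_ge0_discr => t; have := dot_ge0 (fun i => u i + t * v i).
  by rewrite dotDl !dotDr !dotZl !dotZr (dotC v u); lra.
rewrite -!vnorm_sqr => H.
rewrite -[X in _ <= X]Rabs_pos_eq; last by apply: Rmult_le_pos; apply: vnorm_ge0.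
by apply: Rsqr_le_abs_0; rewrite /Rsqr; nra.
Qed.

Lemma dot_le_vnorm u v : dot u v <= vnorm u * vnorm v.
Proof. exact: Rle_trans (Rle_abs _) (cauchy_schwarz u v). Qed.

End Vectors.

Section Matrices.
Variable n : nat.
Implicit Types (u v w : vec n) (A : mat n).

Lemma mvE A v i : mv A v i = (\sum_(j < n) A i j * v j)%R.
Proof. by []. Qed.

Lemma mvDl A B v i : mv (madd A B) v i = mv A v i + mv B v i.
Proof. by rewrite !mvE -big_split; apply: eq_bigr => j _; apply: mulrDl. Qed.

Lemma mvBl A B v i : mv (msub A B) v i = mv A v i - mv B v i.
Proof.
rewrite !mvE; change (?a - ?b) with (a + - b)%R; rewrite -sumrN -big_split.
by apply: eq_bigr => j _; apply: mulrBl.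
Qed.

Lemma mvDr A u v i : mv A (fun j => u j + v j) i = mv A u i + mv A v i.
Proof. by rewrite !mvE -big_split; apply: eq_bigr => j _; apply: mulrDr. Qed.

Lemma mvZr A a v i : mv A (fun j => a * v j) i = a * mv A v i.
Proof.
rewrite !mvE; change (a * ?x) with (a * x)%R; rewrite mulr_sumr.
by apply: eq_bigr => j _; apply: mulrCA.
Qed.

Lemma mv_lincomb A u v t i :
  mv A (fun j => u j + t * v j) i = mv A u i + t * mv A v i.
Proof. by rewrite mvDr mvZr. Qed.

Lemma mv_zero_mat A v : is_zero_mat A -> mv A v =1 (fun=> 0).
Proof. by move=> A0 i; rewrite mvE big1 // => j _; rewrite A0 mul0r. Qed.

Lemma dot_gt0 v : (exists i, v i <> 0) -> 0 < dot v v.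
Proof.
move=> [i vi]; case: (Rle_lt_or_eq_dec _ _ (dot_ge0 v)) => // /esym/dot_eq0 v0.
by case: (vi (v0 i)).
Qed.

Lemma psd_eigenvalue_ge0 A mu : psd A -> is_eigenvalue A mu -> 0 <= mu.
Proof.
move=> psdA [v [v_neq0 Av]].
have := psdA v; rewrite (eq_dot (frefl _) Av) dotZr.
by have := dot_gt0 v_neq0; nra.
Qed.

Lemma dot_mv_sym A u v : mat_symmetric A -> dot (mv A u) v = dot u (mv A v).
Proof.
move=> symA; rewrite !dotE.
under eq_bigr => i _ do rewrite mvE mulr_suml.
under [RHS]eq_bigr => i _ do rewrite mvE mulr_sumr.
rewrite exchange_big; apply: eq_bigr => i _; apply: eq_bigr => j _.
by rewrite (symA j i) mulrA (mulrC (u i)).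
Qed.

Lemma quad_form_lincomb A u v t : mat_symmetric A ->
  dot (fun i => u i + t * v i) (mv A (fun i => u i + t * v i))
  = dot u (mv A u) + 2 * dot u (mv A v) * t + dot v (mv A v) * t * t.
Proof.
move=> symA; rewrite (eq_dot (frefl _) (mv_lincomb A u v t)).
rewrite dotDl !dotDr !dotZl !dotZr (dotC v (mv A u)) (dot_mv_sym u v symA).
by ring.
Qed.

Lemma psd_cauchy_schwarz A u v : mat_symmetric A -> psd A ->
  dot u (mv A v) * dot u (mv A v) <= dot u (mv A u) * dot v (mv A v).
Proof.
move=> symA psdA; apply: quadratic_ge0_discr => t.
by rewrite -quad_form_lincomb //; apply: psdA.
Qed.

(* Cauchy-Schwarz for the semi-inner product [(u, v) |-> u' A v], applied to [w]
   and [A w]. *)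
Lemma psd_vnorm_mv_le A mu w : mat_symmetric A -> psd A -> 0 <= mu ->
  (forall w, dot w (mv A w) <= mu * dot w w) -> vnorm (mv A w) <= mu * vnorm w.
Proof.
move=> symA psdA mu0 rayleigh.
set p := mv A w.
have pp0 := dot_ge0 p; have ww0 := dot_ge0 w.
have Hcs := psd_cauchy_schwarz w p symA psdA.
rewrite -(dot_mv_sym _ _ symA) -/p in Hcs.
have Hw : dot w p <= mu * dot w w := rayleigh w.
have Hp := rayleigh p; have wAw0 : 0 <= dot w p := psdA w.
have Hpp : dot p p <= mu * mu * dot w w.
  case: (Rle_lt_or_eq_dec _ _ pp0) => [ppP | <-]; last nra.
  apply: (Rmult_le_reg_r (dot p p)) => //.
  have pAp0 := psdA p.
  have := Rmult_le_compat _ _ _ _ wAw0 pAp0 Hw Hp; nra.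
rewrite /vnorm -(sqrt_Rsqr mu) // -sqrt_mult; [|exact: Rle_0_sqr|exact: ww0].
exact: sqrt_le_1_alt.
Qed.

End Matrices.

Section RayleighQuotient.
Variable n : nat.
Implicit Types (A : mat n).
Local Open Scope classical_set_scope.

Definition vec_of_row (w : 'rV[R]_n) : vec n := fun i => w ord0 i.

Lemma vec_of_rowK v : vec_of_row (\row_j v j) = v.
Proof. by apply: funext => i; rewrite /vec_of_row mxE. Qed.

Lemma continuous_bigsum (T : topologicalType) (I : Type) (r : seq I) (P : pred I)
    (F : I -> T -> R) :
  (forall j, continuous (F j)) -> continuous (fun x => (\sum_(j <- r | P j) F j x)%R).
Proof.
move=> cF; elim: r => [|a r IHr].
  by under eq_fun do rewrite big_nil; apply: cst_continuous.
under eq_fun do rewrite big_cons.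
case: (P a) => // x.
exact: (@continuousD R R^o T (F a) (fun x => \sum_(j <- r | P j) F j x)%R x (cF a x) (IHr x)).
Qed.

Lemma continuous_dot (F G : 'I_n -> 'rV[R]_n -> R) :
  (forall i, continuous (F i)) -> (forall i, continuous (G i)) ->
  continuous (fun w => dot (fun i => F i w) (fun i => G i w)).
Proof.
move=> cF cG; apply: (@continuous_bigsum _ _ _ _ (fun i w => F i w * G i w)) => i x.
by apply: continuousM; [apply: cF | apply: cG].
Qed.

Lemma continuous_mv A i : continuous (fun w => mv A (vec_of_row w) i).
Proof.
apply: (@continuous_bigsum _ _ _ _ (fun j w => A i j * vec_of_row w j)) => j x.
by apply: continuousM; [apply: cst_continuous | apply: coord_continuous].
Qed.

Lemma rayleigh_max A : (0 < n)%N ->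
  exists2 v : vec n, dot v v = 1 &
    forall w : vec n, dot w w = 1 -> dot w (mv A w) <= dot v (mv A v).
Proof.
move=> n_gt0.
pose sphere := (fun w : 'rV[R]_n => dot (vec_of_row w) (vec_of_row w)) @^-1` [set 1].
have sphere_closed : closed sphere.
  apply: preimage_closed; last exact: closed_eq.
  by move=> w _; apply: continuous_dot => i; apply: coord_continuous.
have cube_compact : compact [set w : 'rV[R]_n | forall i, `[-1, 1]%classic (w ord0 i)].
  by apply: (@rV_compact R n (fun=> `[-1, 1]%classic)) => _; apply: segment_compact.
have sphere_compact : compact sphere.
  apply: (subclosed_compact sphere_closed cube_compact) => w /= w1 i.
  have := sqr_le_dot (vec_of_row w) i; rewrite w1 /vec_of_row => wi.
  rewrite /= in_itv /=; apply/andP; split; apply/RleP; nra.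
have sphere_neq0 : sphere !=set0.
  exists (\row_j if j == Ordinal n_gt0 then 1 else 0)%R.
  rewrite /sphere /= vec_of_rowK dotE (bigD1 (Ordinal n_gt0)) //= big1 => [|j /negbTE ->].
    by rewrite mulr1 addr0.
  exact: mulr0.
have rayleigh_cont : continuous (fun w => dot (vec_of_row w) (mv A (vec_of_row w))).
  apply: continuous_dot => i; [exact: coord_continuous | exact: continuous_mv].
have [c] := EVT_max_rV sphere_neq0 sphere_compact (continuous_subspaceT rayleigh_cont).
rewrite inE => c1 cmax; exists (vec_of_row c) => // w w1.
by apply/RleP; rewrite -[w]vec_of_rowK; apply: cmax; rewrite inE /sphere /= vec_of_rowK.
Qed.

End RayleighQuotient.

Section LargestEigenvalue.
Variable n : nat.
Implicit Types (v w : vec n) (A : mat n).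

Lemma rayleigh_max_eigenvalue A : mat_symmetric A -> (0 < n)%N ->
  exists mu, is_eigenvalue A mu /\ forall w, dot w (mv A w) <= mu * dot w w.
Proof.
move=> symA n_gt0; have [v v1 vmax] := rayleigh_max A n_gt0.
exists (dot v (mv A v)); set mu := dot v (mv A v).
have rayleigh w : dot w (mv A w) <= mu * dot w w.
  case: (Rle_lt_or_eq_dec _ _ (dot_ge0 w)) => [wP | /esym/dot_eq0 w0]; last first.
    by rewrite !(dot0l _ w0); lra.
  set a := / vnorm w.
  have a2 : a * a * dot w w = 1.
    by rewrite -vnorm_sqr /a; field; apply: Rgt_not_eq; apply: sqrt_lt_R0.
  have := vmax (fun i => a * w i); rewrite (eq_dot (frefl _) (mvZr A a w)).
  rewrite !dotZl !dotZr -Rmult_assoc a2 => /(_ erefl) H.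
  have := Rmult_le_compat_r _ _ _ (Rlt_le _ _ wP) H.
  have -> : a * (a * dot w (mv A w)) * dot w w = a * a * dot w w * dot w (mv A w) by ring.
  by rewrite a2 Rmult_1_l.
(* [v + t w] cannot beat [v], so the quadratic in [t] below has no linear term. *)
have first_order w : dot (mv A v) w = mu * dot v w.
  have := @quadratic_ge0_discr 0 (mu * dot v w - dot v (mv A w))
                                  (mu * dot w w - dot w (mv A w)).
  have vtw t : dot (fun i => v i + t * w i) (fun i => v i + t * w i)
             = 1 + 2 * dot v w * t + dot w w * t * t.
    by rewrite dotDl !dotDr !dotZl !dotZr (dotC w v) v1; ring.
  have quad_ge0 t : 0 <= 0 + 2 * (mu * dot v w - dot v (mv A w)) * t
                    + (mu * dot w w - dot w (mv A w)) * t * t.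
    have := rayleigh (fun i => v i + t * w i).
    by rewrite quad_form_lincomb // vtw -/mu; nra.
  move=> /(_ quad_ge0); rewrite dot_mv_sym //; nra.
have eigen : forall i, mv A v i = mu * v i.
  move=> i; apply: Rminus_diag_uniq; move: i; apply: dot_eq0.
  by rewrite dotBr dotZr (dotC _ (mv A v)) first_order (dotC v); ring.
split=> //; exists v; split=> //.
apply/not_existsP => v0; suff : dot v v = 0 by lra.
by apply: dot0l => i; apply: contrapT; apply: v0.
Qed.

Lemma vnorm_mv_le_lambda_max A lmax w : mat_symmetric A -> psd A ->
  is_lambda_max A lmax -> vnorm (mv A w) <= lmax * vnorm w.
Proof.
move=> symA psdA [[e [[i _] _]] lmax_ub].
have n_gt0 : (0 < n)%N by apply: leq_ltn_trans (leq0n i) (ltn_ord i).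
have [mu [mu_eig rayleigh]] := rayleigh_max_eigenvalue symA n_gt0.
have := psd_vnorm_mv_le w symA psdA (psd_eigenvalue_ge0 psdA mu_eig) rayleigh.
by have := lmax_ub mu mu_eig; have := vnorm_ge0 w; nra.
Qed.

End LargestEigenvalue.

Lemma vnorm_mv_le_cond_number n (A : mat n) (kk b : R) (v : vec n) :
  0 <= b -> mat_symmetric A -> psd A ->
  (forall l, is_lambda_min A l -> l <= b) ->
  (exists c, is_cond_number A c /\ ole c kk) ->
  vnorm (mv A v) <= kk * b * vnorm v.
Proof.
move=> b0 symA psdA lmin_ub [c [cond kk_ub]]; have v0 := vnorm_ge0 v.
case: cond kk_ub
  => [[A0 ->] | [_ [lmin [lmax [lmin_def [lmax_def [[_ ->] | [lmin_gt0 ->]]]]]]]] //= kk_ub.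
- rewrite (@eq_vnorm _ _ (fun i => 0 * v i)) ?vnormZ ?Rabs_R0.
    by rewrite Rmult_0_l; apply: Rmult_le_pos => //; apply: Rmult_le_pos => //; lra.
  by move=> i; rewrite (mv_zero_mat v A0); ring.
- have lmax_le : lmax <= kk * lmin.
    have := Rmult_le_compat_r _ _ _ (Rlt_le _ _ lmin_gt0) kk_ub.
    by rewrite /Rdiv Rmult_assoc Rinv_l ?Rmult_1_r; lra.
  have lmin_le := lmin_ub lmin lmin_def; have := lmax_def.2 lmin lmin_def.1 => lmin_lmax.
  apply: Rle_trans (vnorm_mv_le_lambda_max v symA psdA lmax_def) _.
  by apply: Rmult_le_compat_r => //; nra.
Qed.

Lemma Rpower_1_l y : Rpower 1 y = 1.
Proof. by rewrite /Rpower ln_1 Rmult_0_r exp_0. Qed.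

Lemma Rpower_le_1 x a : 0 < x <= 1 -> 0 <= a -> Rpower x a <= 1.
Proof. by move=> x01 a0; rewrite -(Rpower_1_l a); apply: (Rle_Rpower_l _ _ _ a0). Qed.

Lemma rpow_Rpower x a : 0 < x -> rpow x a = Rpower x a.
Proof. by move=> x0; rewrite /rpow; case: Req_dec_T => [x0' | //]; lra. Qed.

Lemma rpow_ge0 x a : 0 <= rpow x a.
Proof.
rewrite /rpow; case: Req_dec_T => _ /=; first by case: Req_dec_T => _ /=; lra.
exact/Rlt_le/exp_pos.
Qed.

Lemma continuity_pt_locally_lipschitz (f : R -> R) x :
  (forall t, Rabs (t - x) < 1 -> Rabs (f t - f x) <= Rabs (t - x)) -> continuity_pt f x.
Proof.
move=> lip eps eps0; exists (Rmin eps 1); split; first by apply: Rmin_pos; lra.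
move=> t [_ tx]; rewrite /= /R_dist in tx *.
have := lip t (Rlt_le_trans _ _ _ tx (Rmin_r _ _)); have := Rmin_l eps 1; lra.
Qed.

Lemma derive_nonpos_le (phi phi' : R -> R) a b : a < b ->
  (forall c, a < c < b -> derivable_pt_lim phi c (phi' c)) ->
  (forall c, a <= c <= b -> continuity_pt phi c) ->
  (forall c, a < c < b -> phi' c <= 0) -> phi b <= phi a.
Proof.
move=> ab dphi cphi phi'_le0.
pose pr c (P : a < c < b) := exist (derivable_pt_abs phi c) (phi' c) (dphi c P).
have [c [P E]] := Stdlib.Reals.MVT.MVT phi Ranalysis1.id a b pr
  (fun c _ => derivable_pt_id c) ab cphi
  (fun c _ => derivable_continuous_pt _ _ (derivable_pt_id c)).
rewrite derive_pt_id /= /Ranalysis1.id in E.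
by have := phi'_le0 c P; nra.
Qed.

(* A primitive of [t |-> t ^ alpha] on [0, +oo), extended by [0] to the left so
   that it is continuous at [0] (where it is not differentiable if [alpha = 0]). *)
Definition power_primitive (alpha t : R) : R :=
  if Rlt_dec 0 t then Rpower t (1 + alpha) / (1 + alpha) else 0.

Lemma power_primitive_derive alpha c : 0 <= alpha -> 0 < c ->
  derivable_pt_lim (power_primitive alpha) c (Rpower c alpha).
Proof.
move=> alpha0 c0.
apply: (@derivable_pt_lim_locally_ext (fun t => / (1 + alpha) * Rpower t (1 + alpha))
          _ _ 0 (c + 1)).
- lra.
- move=> t t0; rewrite /power_primitive.
  by case: (Rlt_dec 0 t) => [tP | tN] /=; [rewrite /Rdiv Rmult_comm | lra].
- have -> : Rpower c alpha = / (1 + alpha) * ((1 + alpha) * Rpower c (1 + alpha - 1)).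
    rewrite (_ : 1 + alpha - 1 = alpha); last by ring.
    by field; lra.
  exact/derivable_pt_lim_scal/derivable_pt_lim_power.
Qed.

Lemma power_primitive_continuous alpha c : 0 <= alpha -> 0 <= c ->
  continuity_pt (power_primitive alpha) c.
Proof.
move=> alpha0; case/Rle_lt_or_eq_dec => [c0 | <-].
  by apply: derivable_continuous_pt; exists (Rpower c alpha); apply: power_primitive_derive.
apply: continuity_pt_locally_lipschitz => t; rewrite /power_primitive !Rminus_0_r => t1.
case: (Rlt_dec 0 0) => [|_] /=; first lra.
case: (Rlt_dec 0 t) => [t0 | _] /=; last by rewrite Rminus_0_r Rabs_R0; apply: Rabs_pos.
rewrite Rabs_pos_eq in t1; last lra.
have inv_pos : 0 < / (1 + alpha) by apply: Rinv_0_lt_compat; lra.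
have inv_le1 : / (1 + alpha) <= 1 by rewrite -Rinv_1; apply: Rinv_le_contravar; lra.
have tpow_pos : 0 < Rpower t alpha by apply: exp_pos.
have tpow_le1 := Rpower_le_1 (conj t0 (Rlt_le _ _ t1)) alpha0.
have tx : 0 < t * Rpower t alpha <= t by split; nra.
rewrite Rminus_0_r Rpower_plus Rpower_1 // !Rabs_pos_eq /Rdiv;
  [nra | lra | apply: Rmult_le_pos; lra].
Qed.

Lemma rpow_mul c y a : 0 < c -> 0 <= y -> rpow (c * y) a = Rpower c a * rpow y a.
Proof.
move=> c0; case/Rle_lt_or_eq_dec => [y0 | <-].
  by rewrite !rpow_Rpower ?Rpower_mult_distr //; nra.
rewrite Rmult_0_r /rpow; case: Req_dec_T => //= _.
case: Req_dec_T => [a0 | _] /=; last by rewrite Rmult_0_r.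
by rewrite a0 Rpower_O // Rmult_1_r.
Qed.

Section TaylorHolder.
Variables (n : nat) (g : vec n -> vec n) (H : vec n -> mat n).
Hypothesis dg : is_derivative_map g H.

Lemma derivable_pt_lim_dot_line (x s u : vec n) t :
  derivable_pt_lim (fun t => dot u (g (fun i => x i + t * s i))) t
                   (dot u (mv (H (fun i => x i + t * s i)) s)).
Proof.
move=> eps eps0; set xt := fun i => x i + t * s i.
have u0 := vnorm_ge0 u; have s0 := vnorm_ge0 s.
set K := vnorm u * vnorm s + 1.
have K0 : 0 < K by rewrite /K; nra.
have [delta [delta0 remainder]] := dg xt (Rdiv_lt_0_compat _ _ eps0 K0).
have delta'0 : 0 < delta / (vnorm s + 1) by apply: Rdiv_lt_0_compat; lra.
exists (mkposreal _ delta'0) => h h0 /= h_lt.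
have h_pos := Rabs_pos_lt _ h0.
have hs_norm : vnorm (fun i => h * s i) = Rabs h * vnorm s by apply: vnormZ.
have hs_lt : vnorm (fun i => h * s i) < delta.
  have : Rabs h * (vnorm s + 1) < delta.
    have := Rmult_lt_compat_r (vnorm s + 1) _ _ ltac:(lra) h_lt.
    by rewrite /Rdiv Rmult_assoc Rinv_l; lra.
  by rewrite hs_norm; nra.
have := remainder _ hs_lt; set D := vsub _ _ => D_le.
have uD : dot u D = dot u (g (fun i => x i + (t + h) * s i)) - dot u (g xt)
                    - h * dot u (mv (H xt) s).
  rewrite -dotZr -!dotBr; apply: eq_dot => // i.
  rewrite /D /vsub mvZr /vadd /xt; do 3 f_equal.
  by apply: funext => j; ring.
have -> : (dot u (g (fun i => x i + (t + h) * s i)) - dot u (g xt)) / h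
          - dot u (mv (H xt) s) = dot u D / h by rewrite uD; field.
rewrite /Rdiv Rabs_mult Rabs_inv; apply: (Rmult_lt_reg_r (Rabs h)) => //.
rewrite Rmult_assoc Rinv_l ?Rmult_1_r; last lra.
apply: Rle_lt_trans (cauchy_schwarz u D) _.
apply: Rle_lt_trans (_ : vnorm u * (eps / K * (Rabs h * vnorm s)) < eps * Rabs h).
  by apply: Rmult_le_compat_l => //; rewrite -hs_norm.
have : vnorm u * vnorm s * (eps / K) < eps.
  apply: (Rmult_lt_reg_r K) => //.
  have -> : vnorm u * vnorm s * (eps / K) * K = vnorm u * vnorm s * eps by field; lra.
  by rewrite /K; nra.
nra.
Qed.

Variables (L_H alpha : R).
Hypotheses (alpha0 : 0 <= alpha) (L_H0 : 0 <= L_H).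
Hypothesis holderH : forall y z v,
  vnorm (mv (msub (H y) (H z)) v) <= L_H * rpow (vnorm (vsub y z)) alpha * vnorm v.

(* By the Hölder bound on [H], [t |-> u'g(x + t s) - t u'H(x)s - K t^(1+alpha)/(1+alpha)]
   has a nonpositive derivative on [(0, 1)]; comparing its values at [0] and [1] yields
   the factor [1/(1+alpha)]. *)
Lemma dot_taylor_remainder_le (x s u : vec n) :
  dot u (fun i => g (vadd x s) i - g x i - mv (H x) s i)
    <= vnorm u * L_H * rpow (vnorm s) alpha * vnorm s / (1 + alpha).
Proof.
set K := vnorm u * L_H * rpow (vnorm s) alpha * vnorm s.
set l0 := dot u (mv (H x) s).
pose xt t := fun i => x i + t * s i.
pose psi t := dot u (g (xt t)).
pose phi := (psi - mult_real_fct l0 id - mult_real_fct K (power_primitive alpha))%F.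
pose phi' t := dot u (mv (H (xt t)) s) - l0 * 1 - K * Rpower t alpha.
have u0 := vnorm_ge0 u; have s0 := vnorm_ge0 s.
have dphi c : 0 < c < 1 -> derivable_pt_lim phi c (phi' c).
  move=> c01; apply: derivable_pt_lim_minus; last first.
    by apply/derivable_pt_lim_scal/power_primitive_derive; lra.
  apply: derivable_pt_lim_minus; first exact: derivable_pt_lim_dot_line.
  exact/derivable_pt_lim_scal/derivable_pt_lim_id.
have cphi c : 0 <= c <= 1 -> continuity_pt phi c.
  move=> c01; apply: continuity_pt_minus; last first.
    by apply/continuity_pt_scal/power_primitive_continuous; lra.
  apply: derivable_continuous_pt; exists (dot u (mv (H (xt c)) s) - l0 * 1).
  apply: derivable_pt_lim_minus; first exact: derivable_pt_lim_dot_line.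
  exact/derivable_pt_lim_scal/derivable_pt_lim_id.
have phi'_le0 c : 0 < c < 1 -> phi' c <= 0.
  move=> c01; rewrite /phi' Rmult_1_r /l0 -dotBr.
  rewrite (eq_dot (frefl _) (fun i => esym (mvBl (H (xt c)) (H x) s i))).
  apply: Rle_minus; apply: Rle_trans (Rle_abs _) _.
  apply: Rle_trans (cauchy_schwarz _ _) _.
  have := holderH (xt c) x s.
  rewrite (@eq_vnorm _ (vsub (xt c) x) (fun i => c * s i));
    last by move=> i; rewrite /vsub /xt; ring.
  rewrite vnormZ Rabs_pos_eq; last lra.
  rewrite rpow_mul //; last lra.
  have := Rmult_le_pos _ _ (Rlt_le _ _ (exp_pos (alpha * ln c))) (rpow_ge0 (vnorm s) alpha).
  rewrite /K -/(Rpower c alpha) => pos Hb.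
  have := Rmult_le_compat_l _ _ _ u0 Hb; nra.
have := derive_nonpos_le Rlt_0_1 dphi cphi phi'_le0.
rewrite /phi /minus_fct /mult_real_fct /psi /id /power_primitive.
case: (Rlt_dec 0 1) => [lt01 | /(_ Rlt_0_1) []].
case: (Rlt_dec 0 0) => [/Rlt_irrefl [] | nlt00].
have -> : xt 1 = vadd x s by apply: funext => i; rewrite /xt /vadd; ring.
have -> : xt 0 = x by apply: funext => i; rewrite /xt; ring.
rewrite Rpower_1_l !dotBr -/l0 /Rdiv /= Rmult_1_l; lra.
Qed.

Lemma vnorm_grad_step_le (x s r : vec n) (M : mat n) (cr cM : R) :
  0 <= cr ->
  (forall i, mv (madd (H x) M) s i = - g x i + r i) ->
  vnorm r <= cr * vnorm (mv M s) ->
  vnorm (mv M s) <= cM * (rpow (vnorm s) alpha * vnorm s) ->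
  vnorm (g (vadd x s)) <= (L_H / (1 + alpha) + (1 + cr) * cM) * (rpow (vnorm s) alpha * vnorm s).
Proof.
move=> cr0 step r_le Ms_le; set u := g (vadd x s).
set S := rpow (vnorm s) alpha * vnorm s in Ms_le *.
have u0 := vnorm_ge0 u; have Ms0 := vnorm_ge0 (mv M s).
have decomp : dot u u = dot u (fun i => u i - g x i - mv (H x) s i) + dot u r - dot u (mv M s).
  rewrite -dotDr -dotBr; apply: eq_dot => // i.
  by have := step i; rewrite mvDl; lra.
have taylor := dot_taylor_remainder_le x s u; rewrite -/u in taylor.
have ur := dot_le_vnorm u r; have uMs := cauchy_schwarz u (mv M s).
have := Rle_abs (- dot u (mv M s)); rewrite Rabs_Ropp => uMs'.
have S0 : 0 <= S by apply: Rmult_le_pos; [apply: rpow_ge0 | apply: vnorm_ge0].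
have LH0 : 0 <= L_H / (1 + alpha) by apply: Rmult_le_pos; [|left; apply: Rinv_0_lt_compat]; lra.
have cMS0 : 0 <= cM * S by lra.
have CS0 : 0 <= (L_H / (1 + alpha) + (1 + cr) * cM) * S.
  by rewrite Rmult_plus_distr_r Rmult_assoc; apply: Rplus_le_le_0_compat; nra.
suff : vnorm u * vnorm u <= vnorm u * ((L_H / (1 + alpha) + (1 + cr) * cM) * S).
  by case/Rle_lt_or_eq_dec: u0 => [u_pos /(Rmult_le_reg_l _ _ _ u_pos) | <-].
rewrite vnorm_sqr decomp.
have -> : vnorm u * ((L_H / (1 + alpha) + (1 + cr) * cM) * S)
          = vnorm u * L_H * rpow (vnorm s) alpha * vnorm s / (1 + alpha)
            + vnorm u * ((1 + cr) * (cM * S)) by rewrite /S; field; lra.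
have : vnorm r + vnorm (mv M s) <= (1 + cr) * (cM * S) by nra.
nra.
Qed.

End TaylorHolder.

Lemma root_le_of_le_pow (A a y z : R) : 0 < A -> 0 <= a -> 0 <= y -> 0 <= z ->
  y <= A * (rpow z a * z) -> Rpower A (- (1 / (1 + a))) * rpow y (1 / (1 + a)) <= z.
Proof.
move=> A0 a0 y0 z0 y_le; set b := 1 / (1 + a).
have b0 : 0 < b by apply: Rdiv_lt_0_compat; lra.
case/Rle_lt_or_eq_dec: y0 => [y_pos | <-]; last first.
  by rewrite /rpow; case: Req_dec_T => //= _; case: Req_dec_T => [| _] /=; lra.
have z_pos : 0 < z.
  case/Rle_lt_or_eq_dec: z0 => // z_eq.
  by rewrite -z_eq !Rmult_0_r in y_le; lra.
have zpow : rpow z a * z = Rpower z (1 + a).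
  by rewrite rpow_Rpower // Rpower_plus Rpower_1 // Rmult_comm.
rewrite zpow in y_le; rewrite rpow_Rpower //.
have : Rpower y b <= Rpower A b * z.
  have -> : Rpower A b * z = Rpower (A * Rpower z (1 + a)) b.
    rewrite -Rpower_mult_distr ?Rpower_mult; [|lra|exact: exp_pos].
    by rewrite (_ : (1 + a) * b = 1) ?Rpower_1 // /b; field; lra.
  by apply: Rle_Rpower_l; lra.
have : Rpower A (- b) * Rpower A b = 1 by rewrite -Rpower_plus Rplus_opp_l Rpower_O.
have := exp_pos (- b * ln A); rewrite -/(Rpower A (- b)); nra.
Qed.

Theorem lemma2p3 (n : nat) (alpha : R) (f : vec n -> R) (g : vec n -> vec n)
  (H : vec n -> mat n) (L_g L_H : R)
  (x s r : nat -> vec n) (M : nat -> mat n)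
  (kappa_rg kappa_rs kappa_lam kappa_kap : R) :
  0 <= alpha <= 1 ->
  is_gradient f g -> is_derivative_map g H -> mat_continuous H ->
  (exists lb, forall y, lb <= f y) ->
  0 <= L_g -> (forall y z, vnorm (vsub (g y) (g z)) <= L_g * vnorm (vsub y z)) ->
  0 <= L_H ->
  (forall y z (v : vec n),
      vnorm (mv (msub (H y) (H z)) v) <= L_H * rpow (vnorm (vsub y z)) alpha * vnorm v) ->
  0 <= kappa_rg < 1 -> 0 < kappa_rs -> 1 < kappa_lam -> 1 <= kappa_kap ->
  (forall k i, x (S k) i = x k i + s k i) ->
  (forall k i, mv (madd (H (x k)) (M k)) (s k) i = - g (x k) i + r k i) ->
  (forall k, vnorm (r k) <= Rmin (kappa_rg * vnorm (g (x k)))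
                                  (kappa_rs * vnorm (mv (M k) (s k)))) ->
  (forall k, mat_symmetric (M k) /\ psd (M k)) ->
  (forall k l, is_lambda_min (M k) l -> l <= kappa_lam * rpow (vnorm (s k)) alpha) ->
  (forall k, exists c, is_cond_number (M k) c /\ ole c kappa_kap) ->
  let kappa_s := Rpower (L_H / (1 + alpha) + kappa_kap * (1 + kappa_rs) * kappa_lam)
                        (- (1 / (1 + alpha))) in
  0 < kappa_s /\
  forall k, kappa_s * rpow (vnorm (g (x (S k)))) (1 / (1 + alpha)) <= vnorm (s k).
Proof.
move=> alpha01 _ dg _ _ _ _ L_H0 holderH _ rs0 lam1 kap1 xS step r_le M_psd lmin_le cond kappa_s.
split=> [|k]; first exact: exp_pos.
have Ms_le : vnorm (mv (M k) (s k))
             <= kappa_kap * kappa_lam * (rpow (vnorm (s k)) alpha * vnorm (s k)).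
  rewrite (_ : kappa_kap * kappa_lam * _ = kappa_kap * (kappa_lam * rpow (vnorm (s k)) alpha)
                                          * vnorm (s k)); last by ring.
  case: (M_psd k) => symM psdM.
  apply: (vnorm_mv_le_cond_number _ _ symM psdM (lmin_le k) (cond k)).
  by have := rpow_ge0 (vnorm (s k)) alpha; nra.
have := vnorm_grad_step_le dg (proj1 alpha01) L_H0 holderH (Rlt_le _ _ rs0) (step k)
          (Rle_trans _ _ _ (r_le k) (Rmin_r _ _)) Ms_le.
have -> : vadd (x k) (s k) = x (S k) by apply: funext => i; rewrite xS.
rewrite (_ : (1 + kappa_rs) * (kappa_kap * kappa_lam) = kappa_kap * (1 + kappa_rs) * kappa_lam);
  last by ring.
apply: root_le_of_le_pow; try apply: vnorm_ge0; last lra.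
have : 0 <= L_H / (1 + alpha) by apply: Rmult_le_pos; [|left; apply: Rinv_0_lt_compat]; lra.
have : 0 < kappa_kap * (1 + kappa_rs) * kappa_lam by apply: Rmult_lt_0_compat; nra.
lra.
Qed.
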